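(* The dendriform coalgebra $(\mathcal{A},\Delta_\leftarrow,\Delta_\rightarrow)$ is connected: for every $a\in\mathcal{A}^+$ there exists $n_a\in\mathbb{N}$ such that $P(a)=0$ for all $P\in\mathcal{P}(n_a)$.
   Context: Trees: planar rooted trees in which every internal vertex has at least two children; the root vertex hangs from a trunk edge; leaves are edges without upper vertex; $|$ is the one-leaf tree; $T_n$ = trees with $n+1$ leaves, $\mathcal A_n=\mathbb K T_n$, $\mathcal A=\bigoplus_n\mathcal A_n$, $\mathcal A^+=\bigoplus_{n\ge1}\mathcal A_n$, with the product $*$ of the Loday–Ronco free tridendriform algebra ($x_0\vee\cdots\vee x_k$ grafts trees on a new root; for $x=x^{(0)}\vee\cdots\vee x^{(k)}$, $y=y^{(0)}\vee\cdots\vee y^{(l)}$: $x\prec y=x^{(0)}\vee\cdots\vee x^{(k-1)}\vee(x^{(k)}*y)$, $x\cdot y=x^{(0)}\vee\cdots\vee x^{(k-1)}\vee(x^{(k)}*y^{(0)})\vee y^{(1)}\vee\cdots\vee y^{(l)}$, $x\succ y=(x*y^{(0)})\vee y^{(1)}\vee\cdots\vee y^{(l)}$, $*=\prec+\cdot+\succ$, $|*z=z*|=z$). Admissible cuts: internal edges join two internal vertices; a cut is a nonempty set of internal edges, plus the empty and total (below the root) cuts; admissible if every root-to-leaf path meets at most one chosen edge; $P^c(t)$ is the component containing the root, $G^c(t)=G^c_1(t)*\cdots*G^c_m(t)$ the product of the cut-off trees from left to right (empty cut: $P^c=t,G^c=|$; total cut: $P^c=|,G^c=t$). For $t\ne|$: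 $\Delta_\leftarrow(t)$ is the sum of $G^c(t)\otimes P^c(t)$ over admissible cuts with the right-most leaf of $t$ not in $P^c(t)$, $\Delta_\rightarrow(t)$ the sum over the others; the reduced maps are $\tilde\Delta_\leftarrow(t)=\Delta_\leftarrow(t)-t\otimes|$, $\tilde\Delta_\rightarrow(t)=\Delta_\rightarrow(t)-|\otimes t$, maps $\mathcal A^+\to\mathcal A^+\otimes\mathcal A^+$. $\mathcal P(0)=\{\mathrm{Id}\}$, $\mathcal P(1)=\{\tilde\Delta_\leftarrow,\tilde\Delta_\rightarrow\}$, and $\mathcal P(n)$ is the set of maps $(\mathrm{Id}^{\otimes(i-1)}\otimes D\otimes\mathrm{Id}^{\otimes(n-i)})\circ P$ with $P\in\mathcal P(n-1)$, $i\in\{1,\dots,n\}$, $D\in\{\tilde\Delta_\leftarrow,\tilde\Delta_\rightarrow\}$. *)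

From HB Require Import structures.
From mathcomp Require Import all_boot all_order all_algebra.
Set Implicit Arguments. Unset Strict Implicit. Unset Printing Implicit Defensive.
Import GRing.Theory.
Local Open Scope ring_scope.

(* Planar rooted trees: a tree is a vertex with its ordered list of children.
   [Node [::]] is the one-leaf tree | (a bare edge); a child equal to
   [Node [::]] is a leaf, any other child is an internal vertex joined to its
   parent by an internal edge. *)
Inductive tree := Node of seq tree.

Definition leaf := Node [::].

Fixpoint tree_enc (t : tree) : GenTree.tree unit :=
  let: Node cs := t in GenTree.Node 0 (map tree_enc cs).
Fixpoint tree_dec (g : GenTree.tree unit) : tree :=
  match g with
  | GenTree.Leaf _ => Node [::]
  | GenTree.Node _ gs => Node (map tree_dec gs)
  end.
Fixpoint tree_encK (t : tree) : tree_dec (tree_enc t) = t :=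
  match t return tree_dec (tree_enc t) = t with
  | Node cs => f_equal Node
      ((fix aux (cs : seq tree) : map tree_dec (map tree_enc cs) = cs :=
          match cs with
          | [::] => erefl
          | c :: cs' => f_equal2 cons (tree_encK c) (aux cs')
          end) cs)
  end.
HB.instance Definition _ := Countable.copy tree (can_type tree_encK).

Fixpoint valid_tree (t : tree) : bool :=
  let: Node cs := t in (cs == [::]) || ((1 < size cs)%N && all valid_tree cs).

Fixpoint tsize (t : tree) : nat :=
  let: Node cs := t in (sumn (map tsize cs)).+1.

(* The product * of the free tridendriform algebra on basis trees;
   the result is the (multiset) sum of the listed trees.
   For x = x0 v ... v xk, y = y0 v ... v yl :
   x < y = x0 v..v x(k-1) v (xk * y),
   x . y = x0 v..v x(k-1) v (xk * y0) v y1 v..v yl,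
   x > y = (x * y0) v y1 v..v yl,   | * z = z * | = z. *)
Fixpoint mulF (f : nat) (x y : tree) : seq tree :=
  match f with
  | 0 => [::]
  | f'.+1 =>
    match x, y with
    | Node [::], _ => [:: y]
    | _, Node [::] => [:: x]
    | Node (x0 :: xs), Node (y0 :: ys) =>
        let xk := last x0 xs in
        let xi := belast x0 xs in
        [seq Node (rcons xi z) | z <- mulF f' xk y]
        ++ [seq Node (xi ++ z :: ys) | z <- mulF f' xk y0]
        ++ [seq Node (z :: ys) | z <- mulF f' x y0]
    end
  end.

Definition mul (x y : tree) : seq tree := mulF (tsize x + tsize y) x y.

Definition Gprod (gs : seq tree) : seq tree :=
  foldr (fun g acc => flatten [seq mul g h | h <- acc]) [:: leaf] gs.

(* Combining the cut choices made independently in each child subtree: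
   returns (list of children of P, cut-off trees from left to right,
            whether the right-most leaf stays in P). *)
Fixpoint combine_cuts (os : seq (seq (tree * seq tree * bool)))
  : seq (seq tree * seq tree * bool) :=
  match os with
  | [::] => [:: ([::], [::], true)]
  | o :: os' =>
      flatten [seq [seq (x.1.1 :: y.1.1, x.1.2 ++ y.1.2,
                         if os' is [::] then x.2 else y.2)
                   | y <- combine_cuts os'] | x <- o]
  end.

(* All admissible cuts of t that do not cut below the root (the empty cut
   included), as triples (P^c(t), [G^c_1; ...; G^c_m], right-most leaf of t
   lies in P^c(t)).  Cutting the edge below an internal child c replaces c
   by a leaf in the root component and cuts off c. *)
Fixpoint cutsI (t : tree) : seq (tree * seq tree * bool) :=
  let: Node cs := t in
  if cs is [::] then [:: (t, [::], true)] else
  [seq (Node x.1.1, x.1.2, x.2) | x <- combine_cuts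
     (map (fun c => (if c is Node (_ :: _) then [:: (leaf, [:: c], false)]
                     else [::]) ++ cutsI c) cs)].

(* all admissible cuts, including the total cut *)
Definition cuts (t : tree) : seq (tree * seq tree * bool) :=
  cutsI t ++ [:: (leaf, [:: t], false)].

(* Delta_<-(t) and Delta_->(t), as multisets of pairs G (x) P *)
Definition DeltaL (t : tree) : seq (tree * tree) :=
  flatten [seq [seq (g, x.1.1) | g <- Gprod x.1.2] | x <- cuts t & ~~ x.2].
Definition DeltaR (t : tree) : seq (tree * tree) :=
  flatten [seq [seq (g, x.1.1) | g <- Gprod x.1.2] | x <- cuts t & x.2].

Section Linear.
Variable K : fieldType.

(* an element of A^{(x) k}: formal K-linear combination of words of trees *)
Definition lin := seq (K * seq tree).

Definition coef (x : lin) (w : seq tree) : K :=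
  \sum_(p <- x) (if p.2 == w then p.1 else 0).

(* reduced coproducts on basis trees (set to 0 on |, outside A^+) *)
Definition redL (t : tree) : seq (K * (tree * tree)) :=
  if t == leaf then [::]
  else [seq (1, gp) | gp <- DeltaL t] ++ [:: (-1, (t, leaf))].
Definition redR (t : tree) : seq (K * (tree * tree)) :=
  if t == leaf then [::]
  else [seq (1, gp) | gp <- DeltaR t] ++ [:: (-1, (leaf, t))].

(* Id^{(x) i} (x) D (x) Id^{..} : D acting on the slot of index i (0-based) *)
Definition applyAt (D : tree -> seq (K * (tree * tree))) (i : nat) (x : lin)
  : lin :=
  flatten [seq [seq (p.1 * q.1, take i p.2 ++ [:: q.2.1; q.2.2] ++ drop i.+1 p.2)
               | q <- D (nth leaf p.2 i)] | p <- x].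

(* a sequence of operations (b, i): b = true means tilde Delta_<-,
   b = false means tilde Delta_->, acting on the slot i (0-based) *)
Definition evalP (ops : seq (bool * nat)) (x : lin) : lin :=
  foldl (fun y o => applyAt (if o.1 then redL else redR) o.2 y) x ops.

End Linear.

(* ops describes an element of P(n): size n and the j-th (0-based) operation
   acts on one of the j+1 tensor factors available at that stage *)
Definition opsP (n : nat) (ops : seq (bool * nat)) : Prop :=
  size ops = n /\ forall j, (j < n)%N -> ((nth (true, 0%N) ops j).2 < j.+1)%N.

Definition embed1 (K : fieldType) (a : seq (K * tree)) : lin K :=
  [seq (p.1, [:: p.2]) | p <- a].

(* a lies in A^+ : a linear combination of trees with at least 2 leaves *)
Definition inAplus (K : fieldType) (a : seq (K * tree)) : bool :=
  all (fun p => valid_tree p.2 && (p.2 != leaf)) a.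

From Pilot Require Import Defs.
From mathcomp Require Import all_boot all_order all_algebra.
From mathcomp Require Import zify.
Set Implicit Arguments. Unset Strict Implicit. Unset Printing Implicit Defensive.

(* Grade trees by their number [ninternal] of internal vertices.  A cut
   distributes the internal vertices of t between the root part P and the
   cut-off trees, and a tridendriform product of trees has at most as many
   internal vertices as its factors together.  Hence, once the term of the
   empty (resp. total) cut has cancelled against the subtracted t ⊗ |
   (resp. | ⊗ t), every term G ⊗ P of a reduced coproduct of t has G, P ≠ |
   and deg G + deg P ≤ deg t.  After n reduced coproducts every surviving
   word has n + 1 letters, each of positive degree, of total degree at most
   deg a: nothing survives deg a steps.  The cancellations happen only at
   the level of coefficients, so the comparison is made coefficientwise. *)

Fixpoint ninternal (t : tree) : nat :=
  let: Node cs := t in if cs is [::] then 0 else (sumn (map ninternal cs)).+1.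

Lemma ninternal_node cs :
  cs != [::] -> ninternal (Node cs) = (sumn (map ninternal cs)).+1.
Proof. by case: cs. Qed.

Lemma Node_neq_leaf cs : cs != [::] -> Node cs != leaf.
Proof. by case: cs => // c cs _; apply/eqP. Qed.

Lemma ninternal_gt0 t : t != leaf -> 0 < ninternal t.
Proof. by case: t => -[|c cs]. Qed.

Lemma size_le_sumn_ninternal w :
  all (predC1 leaf) w -> size w <= sumn (map ninternal w).
Proof.
elim: w => //= t w IH /andP[/ninternal_gt0 t_gt0 /IH]; lia.
Qed.

Definition bounded_word (N n : nat) (w : seq tree) : bool :=
  [&& n < size w, all (predC1 leaf) w & sumn (map ninternal w) <= N].

Lemma bounded_wordNN N w : ~~ bounded_word N N w.
Proof.
apply/and3P=> -[size_w /size_le_sumn_ninternal size_le sum_le].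
by have := leq_trans size_w (leq_trans size_le sum_le); rewrite ltnn.
Qed.

Lemma bounded_words_nil (A : Type) N (y : seq (A * seq tree)) :
  all (bounded_word N N \o snd) y -> y = [::].
Proof.
by case: y => // p y /andP[/= p_bd _]; move: (bounded_wordNN N p.2); rewrite p_bd.
Qed.

Lemma tree_ind_mem (P : tree -> Prop) :
  (forall cs, (forall c, c \in cs -> P c) -> P (Node cs)) -> forall t, P t.
Proof.
move=> IH; fix F 1 => -[cs]; apply: IH.
(* [done] would use [F] on non-structural arguments, hence the explicit steps. *)
elim: cs => [|c cs IHcs] d; first by rewrite in_nil; discriminate.
rewrite in_cons => /predU1P[-> | /IHcs Pd]; [exact: F | exact: Pd].
Qed.

Lemma mulF_neq_leaf f x y z : x != leaf -> z \in mulF f x y -> z != leaf.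
Proof.
case: f => [|f] /=; first by rewrite in_nil.
case: x => -[|x0 xs]; first by rewrite eqxx.
move=> x_ne; case: y => -[|y0 ys]; first by rewrite inE => /eqP->.
by rewrite !mem_cat => /orP[|/orP[]] /mapP[z' _ ->]; apply: Node_neq_leaf;
   case: (belast x0 xs).
Qed.

Lemma ninternal_mulF f x y z :
  z \in mulF f x y -> ninternal z <= ninternal x + ninternal y.
Proof.
elim: f x y z => [|f IH] x y z /=; first by rewrite in_nil.
case: x => -[|x0 xs] /=; first by rewrite inE => /eqP->.
case: y => -[|y0 ys] /=; first by rewrite inE => /eqP->; rewrite addn0.
have split_x : ninternal x0 + sumn (map ninternal xs) =
               sumn (map ninternal (belast x0 xs)) + ninternal (last x0 xs).
  by rewrite -sumn_rcons -map_rcons -lastI.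
rewrite !mem_cat => /orP[|/orP[]] /mapP[z' /IH /= le_z' ->].
- rewrite ninternal_node; last by case: (belast x0 xs).
  by rewrite map_rcons sumn_rcons; lia.
- rewrite ninternal_node; last by case: (belast x0 xs).
  by rewrite map_cat sumn_cat /=; lia.
- by rewrite /=; lia.
Qed.

Lemma ninternal_Gprod gs z :
  z \in Gprod gs -> ninternal z <= sumn (map ninternal gs).
Proof.
elim: gs z => [|g gs IH] z /=; first by rewrite inE => /eqP->.
case/flatten_mapP=> h /IH le_h /ninternal_mulF; lia.
Qed.

Lemma Gprod_neq_leaf g gs z : g != leaf -> z \in Gprod (g :: gs) -> z != leaf.
Proof. by move=> g_ne /flatten_mapP[h _]; apply: mulF_neq_leaf. Qed.

Definition child_cuts (c : tree) : seq (tree * seq tree * bool) :=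
  (if c is Node (_ :: _) then [:: (leaf, [:: c], false)] else [::]) ++ cutsI c.

Lemma cutsI_cons c cs :
  cutsI (Node (c :: cs)) =
  [seq (Node x.1.1, x.1.2, x.2) | x <- combine_cuts (map child_cuts (c :: cs))].
Proof. by []. Qed.

Lemma combine_cuts_ninternal cs (f : tree -> seq (tree * seq tree * bool)) :
  (forall c, c \in cs -> forall x, x \in f c ->
     ninternal x.1.1 + sumn (map ninternal x.1.2) = ninternal c /\
     all (predC1 leaf) x.1.2) ->
  forall y, y \in combine_cuts (map f cs) ->
  [/\ sumn (map ninternal y.1.1) + sumn (map ninternal y.1.2) =
      sumn (map ninternal cs), all (predC1 leaf) y.1.2 & size y.1.1 = size cs].
Proof.
elim: cs => [|c cs IH] Hf y /=; first by rewrite inE => /eqP->.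
case/flatten_mapP=> x /(Hf c (mem_head _ _))[nx allx] /mapP[y' y'_in ->] /=.
have [ny' ally' size_y'] :=
  IH (fun c' c'_in => Hf c' (@mem_behead _ (c :: cs) c' c'_in)) y' y'_in.
by rewrite map_cat sumn_cat all_cat allx ally' size_y' -nx -ny' addnACA.
Qed.

Lemma cutsI_ninternal t x : x \in cutsI t ->
  [/\ ninternal x.1.1 + sumn (map ninternal x.1.2) = ninternal t,
      all (predC1 leaf) x.1.2 & t != leaf -> x.1.1 != leaf].
Proof.
elim/tree_ind_mem: t x => -[|c cs] IH x; first by rewrite inE => /eqP->.
rewrite cutsI_cons => /mapP[[[ps gs] b] y_in ->] /=.
have [|nps allgs size_ps] := combine_cuts_ninternal _ y_in.
  move=> c' c'_in x'; rewrite mem_cat => /orP[|/(IH c' c'_in)[-> ->] //].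
  case: c' {c'_in} => -[|c1 cs1] //; rewrite inE => /eqP-> /=.
  by rewrite addn0 andbT; split=> //; apply: Node_neq_leaf.
case: ps {y_in} nps allgs size_ps => // p ps nps allgs _.
by split=> //; [rewrite addSn nps | move=> _; apply: Node_neq_leaf].
Qed.

Lemma flatten_map_if (A B : Type) (P : pred A) (g : A -> B) (s : seq A) :
  flatten [seq if P x then [:: g x] else [::] | x <- s] = [seq g x | x <- s & P x].
Proof. by elim: s => //= x s ->; case: (P x). Qed.

Lemma combine_cuts_uncut cs (f : tree -> seq (tree * seq tree * bool)) :
  (forall c, c \in cs -> [seq x <- f c | x.1.2 == [::]] = [:: (c, [::], true)]) ->
  [seq y <- combine_cuts (map f cs) | y.1.2 == [::]] = [:: (cs, [::], true)].
Proof.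
elim: cs => [|c cs IH] Hf //=.
have {}IH := IH (fun c' c'_in => Hf c' (@mem_behead _ (c :: cs) c' c'_in)).
have uncut_x x :
    [seq y <- [seq (x.1.1 :: y.1.1, x.1.2 ++ y.1.2,
                    if map f cs is [::] then x.2 else y.2)
              | y <- combine_cuts (map f cs)] | y.1.2 == [::]]
    = if x.1.2 == [::]
      then [:: (x.1.1 :: cs, [::], if map f cs is [::] then x.2 else true)]
      else [::].
  rewrite filter_map; case: eqP => [x2 | /eqP x2].
    rewrite (eq_filter (a2 := fun y => y.1.2 == [::])) => [|y].
      by rewrite IH /= x2.
    by rewrite /= x2.
  by rewrite (eq_filter (a2 := pred0)) ?filter_pred0 // => y /=; case: (x.1.2) x2.
rewrite filter_flatten -map_comp (eq_map uncut_x) flatten_map_if Hf ?mem_head //.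
by case: cs {IH Hf uncut_x}.
Qed.

Lemma cutsI_uncut t : [seq x <- cutsI t | x.1.2 == [::]] = [:: (t, [::], true)].
Proof.
elim/tree_ind_mem: t => -[|c cs] IH //.
rewrite cutsI_cons filter_map (eq_filter (a2 := fun y => y.1.2 == [::])) //.
rewrite combine_cuts_uncut // => c' c'_in.
by rewrite /child_cuts filter_cat IH //; case: c' {c'_in} => -[|? ?].
Qed.

Import GRing.Theory.
Local Open Scope ring_scope.

Section FormalSums.
Variables (K : pzRingType) (T : eqType).
Implicit Types (x y : seq (K * T)) (u : T).

Definition lcoef x u : K := \sum_(p <- x) (if p.2 == u then p.1 else 0).

Definition lequiv x y := forall u, lcoef x u = lcoef y u.

Lemma lcoef_cat x y u : lcoef (x ++ y) u = lcoef x u + lcoef y u.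
Proof. exact: big_cat. Qed.

Lemma perm_lequiv x y : perm_eq x y -> lequiv x y.
Proof. by move=> pxy u; apply: perm_big. Qed.

Lemma lequiv_cancel x (v : T) : lequiv (x ++ [:: (1, v); (-1, v)]) x.
Proof.
move=> u; rewrite lcoef_cat /lcoef !big_cons big_nil.
by case: eqP; rewrite ?addr0 // addrN addr0.
Qed.

Lemma big_lcoef x (U : seq T) (G : T -> K) :
  uniq U -> {subset map snd x <= U} ->
  \sum_(p <- x) p.1 * G p.2 = \sum_(u <- U) lcoef x u * G u.
Proof.
move=> uniqU sub_xU.
under [RHS]eq_bigr => u _ do rewrite /lcoef mulr_suml.
rewrite exchange_big /=; apply: eq_big_seq => p px.
rewrite (bigD1_seq p.2) ?sub_xU ?map_f //= eqxx big1 ?addr0 // => u.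
by rewrite eq_sym => /negPf->; rewrite mul0r.
Qed.

Lemma lequiv_big x y (G : T -> K) :
  lequiv x y -> \sum_(p <- x) p.1 * G p.2 = \sum_(p <- y) p.1 * G p.2.
Proof.
move=> xy; set U := undup (map snd x ++ map snd y).
rewrite (@big_lcoef x U) ?(@big_lcoef y U) ?undup_uniq //.
- by apply: eq_bigr => u _; rewrite xy.
- by move=> v vy; rewrite mem_undup mem_cat vy orbT.
- by move=> v vx; rewrite mem_undup mem_cat vx.
Qed.

End FormalSums.

Section ReducedCoproducts.
Variable K : fieldType.

Definition replace_slot (i : nat) (w : seq tree) (q : tree * tree) : seq tree :=
  take i w ++ [:: q.1; q.2] ++ drop i.+1 w.

Lemma coef_applyAt D i (x : lin K) w :
  coef (applyAt D i x) w =
  \sum_(p <- x) p.1 * \sum_(q <- D (nth leaf p.2 i)) q.1 *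
    (if replace_slot i p.2 q.2 == w then 1 else 0).
Proof.
rewrite /coef big_flatten big_map; apply: eq_bigr => p _.
rewrite big_map mulr_sumr; apply: eq_bigr => q _ /=.
by rewrite /replace_slot; case: eqP; rewrite ?mulr1 ?mulr0.
Qed.

Lemma applyAt_lequiv D D' i (x x' : lin K) :
  lequiv x x' -> (forall t, lequiv (D t) (D' t)) ->
  lequiv (applyAt D i x) (applyAt D' i x').
Proof.
move=> xx' DD' w; change (coef (applyAt D i x) w = coef (applyAt D' i x') w).
pose G u := \sum_(q <- D (nth leaf u i)) q.1 *
              (if replace_slot i u q.2 == w then 1 else 0).
rewrite !coef_applyAt (lequiv_big G xx'); apply: eq_bigr => p _; congr (_ * _).
exact: (lequiv_big (fun q => if replace_slot i p.2 q == w then 1 else 0)).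
Qed.

Definition cut_terms (x : tree * seq tree * bool) : seq (tree * tree) :=
  [seq (g, x.1.1) | g <- Gprod x.1.2].

(* The reduced coproduct computed over the cuts that cut off at least one
   tree and are not total: [left] selects Δ←, and [x.2] records whether the
   right-most leaf stays in P. *)
Definition proper_red (left : bool) (t : tree) : seq (K * (tree * tree)) :=
  if t == leaf then [::] else
  [seq (1, gp) | gp <- flatten [seq cut_terms x | x <- cutsI t &
                                  (x.2 != left) && (x.1.2 != [::])]].

Lemma mul_leafr t : t != leaf -> Defs.mul t leaf = [:: t].
Proof. by case: t => -[|c cs]; rewrite ?eqxx. Qed.

Lemma redL_lequiv t : lequiv (redL K t) (proper_red true t).
Proof.
rewrite /redL /proper_red; case: ifP => t_ne //.
have -> : DeltaL t = flatten [seq cut_terms x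
             | x <- cutsI t & (x.2 != true) && (x.1.2 != [::])] ++ [:: (t, leaf)].
  rewrite /DeltaL /cuts filter_cat map_cat flatten_cat /= mul_leafr ?t_ne //=.
  congr (flatten (map _ _) ++ _); apply: eq_in_filter => x x_in.
  have [x2|] := eqVneq x.1.2 [::]; last by rewrite andbT; case: (x.2).
  have : x \in [seq x <- cutsI t | x.1.2 == [::]] by rewrite mem_filter x2 eqxx.
  by rewrite cutsI_uncut inE => /eqP->.
by rewrite map_cat -catA; apply: lequiv_cancel.
Qed.

Lemma redR_lequiv t : lequiv (redR K t) (proper_red false t).
Proof.
rewrite /redR /proper_red; case: ifP => t_ne //.
set cut := fun x : tree * seq tree * bool => x.1.2 != [::].
have split_cuts : perm_eq [seq x <- cutsI t | x.2]
    ([seq x <- cutsI t | (x.2 != false) && cut x] ++ [:: (t, [::], true)]).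
  rewrite -(perm_filterC cut) -!filter_predI; apply: perm_cat.
    apply/permP=> p; congr count.
    by apply: eq_filter => x /=; case: x.2; rewrite andbC.
  have -> : [seq x <- cutsI t | predI (predC cut) (fun x => x.2) x] =
            [seq x <- [seq x <- cutsI t | x.1.2 == [::]] | x.2].
    by rewrite -filter_predI; apply: eq_filter => x /=; rewrite negbK andbC.
  by rewrite cutsI_uncut.
have split_DeltaR : perm_eq (DeltaR t)
   (flatten [seq cut_terms x | x <- cutsI t & (x.2 != false) && cut x]
    ++ [:: (leaf, t)]).
  rewrite /DeltaR /cuts filter_cat /= cats0.
  have := perm_flatten (perm_map cut_terms split_cuts).
  by rewrite map_cat flatten_cat.
move=> u; rewrite lcoef_cat (perm_lequiv (perm_map _ split_DeltaR)) map_cat.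
by rewrite -lcoef_cat -catA lequiv_cancel.
Qed.

Lemma proper_red_term left t q : q \in proper_red left t ->
  [/\ q.2.1 != leaf, q.2.2 != leaf &
      (ninternal q.2.1 + ninternal q.2.2 <= ninternal t)%N].
Proof.
rewrite /proper_red; case: ifP => // /negbT t_ne.
case/mapP=> _ /flatten_mapP[x + /mapP[g g_in ->]] ->; rewrite mem_filter /=.
case/andP=> /andP[_ cut_x] /cutsI_ninternal[n_x all_gs /(_ t_ne) root_ne].
split=> //; last by rewrite -n_x addnC leq_add2l ninternal_Gprod.
case: x.1.2 cut_x all_gs g_in => // g0 gs _ /andP[g0_ne _].
exact: Gprod_neq_leaf.
Qed.

Lemma applyAt_proper_red left i N n (y : lin K) :
  all (bounded_word N n \o snd) y ->
  all (bounded_word N n.+1 \o snd) (applyAt (proper_red left) i y).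
Proof.
move=> y_bd; apply/allP => z /flatten_mapP[[k w] /(allP y_bd) /= w_bd].
case/mapP=> q q_in ->.
have i_lt : (i < size w)%N.
  by rewrite ltnNge; apply/negP => /(nth_default leaf); move: q_in => /[swap] ->.
have [q1 q2 le_q] := proper_red_term q_in.
have w_split : w = take i w ++ nth leaf w i :: drop i.+1 w.
  by rewrite -drop_nth // cat_take_drop.
rewrite w_split /bounded_word !size_cat !all_cat !map_cat !sumn_cat /= in w_bd.
rewrite /= /bounded_word /replace_slot.
rewrite !size_cat !all_cat !map_cat !sumn_cat /= q1 q2.
case/and3P: w_bd => size_w /and3P[-> _ ->] sum_w /=; apply/andP; split.
  by rewrite addnS ltnS; exact: size_w.
by apply: leq_trans _ sum_w; rewrite leq_add2l addnA leq_add2r.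
Qed.

Definition evalP_proper (ops : seq (bool * nat)) (x : lin K) : lin K :=
  foldl (fun y o => applyAt (proper_red o.1) o.2 y) x ops.

Lemma evalP_lequiv ops (x x' : lin K) :
  lequiv x x' -> lequiv (evalP ops x) (evalP_proper ops x').
Proof.
elim: ops x x' => //= o ops IH x x' xx'; apply/IH/applyAt_lequiv => // t.
by case: o.1; [apply: redL_lequiv | apply: redR_lequiv].
Qed.

Lemma evalP_proper_bounded ops N n (y : lin K) :
  all (bounded_word N n \o snd) y ->
  all (bounded_word N (n + size ops) \o snd) (evalP_proper ops y).
Proof.
elim: ops n y => [|o ops IH] n y /=; first by rewrite addn0.
by move=> y_bd; rewrite -addSnnS; apply/IH/applyAt_proper_red.
Qed.

End ReducedCoproducts.

Theorem mainTheorem13 (K : fieldType) (a : seq (K * tree)) :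
  inAplus a ->
  exists na : nat, forall ops : seq (bool * nat), opsP na ops ->
    forall w : seq tree, coef (evalP ops (embed1 a)) w = 0%R.
Proof.
move=> a_plus; set N := sumn [seq ninternal p.2 | p <- a].
exists N => ops [size_ops _] w.
have a_bd : all (bounded_word N 0 \o snd) (embed1 a).
  apply/allP=> _ /mapP[[k t] kt_in ->]; have /andP[_ t_ne] := allP a_plus _ kt_in.
  rewrite /= /bounded_word /= t_ne addn0.
  rewrite /N; have /perm_to_rem/perm_sumn-> := map_f (fun p => ninternal p.2) kt_in.
  exact: leq_addr.
have := evalP_proper_bounded ops a_bd.
rewrite add0n size_ops => /bounded_words_nil vanish.
change (lcoef (evalP ops (embed1 a)) w = 0).
by rewrite (evalP_lequiv ops (fun u => erefl)) vanish /lcoef big_nil.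
Qed.
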